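(* Let $\mu_1,\mu_2$ be probability measures on $[0,\infty)$ with mean $1$ such that $\Lambda_{\mu_1},\Lambda_{\mu_2}$ are finite on a neighborhood of $0$, and let $P$ be a probability measure. (1) If there is $r_0>0$ with $G_{\mu_1}(r)\ge G_{\mu_2}(r)$ for all $r\in[0,r_0]$ and $G_{\mu_1}(r)\le G_{\mu_2}(r)$ for all $r>r_0$, then $\mathcal{U}^{\mu_1}(P)\subset\mathcal{U}^{\mu_2}(P)$. (2) Let $I_2=\{\lambda>0:\int_0^\infty G_{\mu_2}(z)z^\lambda dz<\infty\}$. If $\lim_{R\to\infty}R^\lambda\int_R^\infty G_{\mu_2}(z)\,dz=0$ for all $\lambda\in I_2$, and $\int_0^rG_{\mu_2}(z)\,dz\le\int_0^rG_{\mu_1}(z)\,dz$ for all $r\ge0$, then $\mathcal{U}^{\mu_1}(P)\subset\mathcal{U}^{\mu_2}(P)$.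
   Context: For a probability measure $\mu$ on $[0,\infty)$ with mean $1$, $G_\mu(r)=\mu([r,\infty))$ for $r\ge0$ and $\Lambda_\mu(\lambda)=\log\big((\lambda+1)\int_0^\infty G_\mu(z)z^\lambda\,dz\big)$ for $\lambda\ge0$. With $\Lambda_Q^f(\lambda)=\log E_Q[e^{\lambda f}]$, and $\Lambda_\mu$ finite near $0$, $\mathcal{U}^\mu(P)=\{Q \text{ probability measure}: Q\ll P,\ \Lambda_Q^{\log(dQ/dP)}(\lambda)\le\Lambda_\mu(\lambda)\ \text{for all }\lambda>0\}$. *)

From HB Require Import structures.
From mathcomp Require Import all_boot all_order all_algebra.
From mathcomp Require Import all_classical all_reals all_analysis.
Set Implicit Arguments. Unset Strict Implicit. Unset Printing Implicit Defensive.
Import Order.TTheory GRing.Theory Num.Theory.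
Import numFieldNormedType.Exports.
Local Open Scope classical_set_scope.
Local Open Scope ring_scope.
Local Open Scope ereal_scope.

Section defs.
Context (R : realType).

Definition Gmu (mu : probability R R) (r : R) : \bar R := mu `[r, +oo[%classic.

Definition Lambda_mu (mu : probability R R) (l : R) : \bar R :=
  lne ((l + 1)%:E *
       \int[lebesgue_measure]_(z in `[0%R, +oo[%classic) (Gmu mu z * (z `^ l)%:E)).

Definition admissible (mu : probability R R) : Prop :=
  [/\ mu `[0%R, +oo[%classic = 1,
      \int[mu]_x x%:E = 1 &
      exists e : R, (0 < e)%R /\
        forall l : R, (0 <= l)%R -> (l < e)%R -> Lambda_mu mu l \is a fin_num].

Context d (T : measurableType d).

Definition Lambda_Q (Q : probability T R) (f : T -> \bar R) (l : R) : \bar R :=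
  lne (\int[Q]_x expeR (l%:E * f x)).

Definition Umu (mu : probability R R) (P : probability T R) : set (probability T R) :=
  [set Q : probability T R | (Q : set T -> \bar R) `<< P /\
     forall l : R, (0 < l)%R ->
       Lambda_Q Q (fun x => lne (Radon_Nikodym (charge_of_finite_measure Q) P x)) l
       <= Lambda_mu mu l].

End defs.

From HB Require Import structures.
From mathcomp Require Import all_boot all_order all_algebra.
From mathcomp Require Import all_classical all_reals all_analysis.
From mathcomp Require Import lra measurable_realfun.
Import Order.TTheory GRing.Theory Num.Theory.
Import numFieldNormedType.Exports.
Local Open Scope classical_set_scope.
Local Open Scope ring_scope.
Local Open Scope ereal_scope.

(* By the layer-cake formula (Tonelli on the region {0 <= t < z^l}),
     \int_0^oo G(z) z^l dz = \int_0^oo (\int_{t^(1/l)}^oo G(z) dz) dt,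
   so Lambda_mu is monotone in the tail integrals s |-> \int_s^oo G_mu.  Since
   \int_0^oo G_mu = mean of mu = 1, the condition of (2) is the same as
   \int_s^oo G_mu1 <= \int_s^oo G_mu2 for all s >= 0; under (1) this holds for
   s <= r0 by the same argument and for s > r0 pointwise. *)

Lemma measurable_set_bool d (T : measurableType d) (b : T -> bool) :
  measurable_fun setT b -> measurable [set x | b x].
Proof. by move=> /(_ measurableT [set true]); rewrite setTI; exact. Qed.

Section layer_cake.
Context (R : realType) (l : R).
Hypothesis l_gt0 : (0 < l)%R.
Local Notation leb := (@lebesgue_measure R).

Lemma ltr_powRV (t z : R) : (0 <= t)%R -> (0 <= z)%R ->
  (t < z `^ l)%R = (t `^ l^-1 < z)%R.
Proof.
move=> t0 z0.
have powRVK : ((t `^ l^-1) `^ l = t)%R by rewrite -powRrM mulVf ?gt_eqF ?powRr1.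
by rewrite -{1}powRVK !ltNge (le_mono_in (gt0_ltr_powR l_gt0)) ?nnegrE ?powR_ge0.
Qed.

Let under_graph : set (R * R) :=
  [set p | (0 <= p.1)%R /\ (0 <= p.2)%R /\ (p.1 < p.2 `^ l)%R].

Let measurable_under_graph : measurable under_graph.
Proof.
rewrite (_ : under_graph = [set p | (0 <= p.1)%R] `&`
   ([set p | (0 <= p.2)%R] `&` [set p | (p.1 < p.2 `^ l)%R])); last first.
  by apply/seteqP; split => p.
apply: measurableI; last apply: measurableI; apply: measurable_set_bool.
- by apply: measurable_fun_ler => //; exact: measurable_fst.
- by apply: measurable_fun_ler => //; exact: measurable_snd.
- apply: measurable_fun_ltr; first exact: measurable_fst.
  exact: measurableT_comp (measurable_powR _) measurable_snd.
Qed.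

Variable f : R -> \bar R.
Hypotheses (f_ge0 : forall x, 0 <= f x) (mf : measurable_fun setT f).

Let F (p : R * R) := f p.2 * (\1_under_graph p)%:E.

Let F_ge0 p : 0 <= F p.
Proof. by rewrite mule_ge0 ?lee_fin. Qed.

Let measurable_F : measurable_fun setT F.
Proof.
apply: emeasurable_funM; first exact: measurableT_comp mf measurable_snd.
by apply/measurable_EFinP; exact: measurable_indic.
Qed.

Let F_sectionl (t : R) : \int[leb]_z F (t, z) =
  ((fun t => \int[leb]_(z in `](t `^ l^-1)%R, +oo[) f z) \_ `[0%R, +oo[) t.
Proof.
rewrite patchE; have [t0|t_lt0] := leP 0%R t; last first.
  rewrite memNset /= ?in_itv /= ?leNgt ?t_lt0 //.
  apply: integral0_eq => z _; rewrite /F indicE memNset ?mule0 //.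
  by case=> t0; move: t_lt0; rewrite ltNge t0.
rewrite mem_set /= ?in_itv /= ?t0 // [RHS]integral_mkcond.
apply: eq_integral => z _; rewrite patchE /F indicE.
have -> : ((t, z) \in under_graph) = (z \in `](t `^ l^-1)%R, +oo[%classic).
  apply/idP/idP => [/set_mem [_ [z0 tz]]|/set_mem].
    by apply: mem_set; rewrite /= in_itv /= andbT -ltr_powRV.
  rewrite /= in_itv /= andbT => tz.
  have z0 : (0 <= z)%R := le_trans (powR_ge0 _ _) (ltW tz).
  by apply: mem_set; split => //; split => //; rewrite ltr_powRV.
by case: ifPn; rewrite ?mule1 ?mule0.
Qed.

Let F_sectionr (z : R) : \int[leb]_t F (t, z) =
  ((fun z => f z * (z `^ l)%:E) \_ `[0%R, +oo[) z.
Proof.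
rewrite patchE; have [z0|z_lt0] := leP 0%R z; last first.
  rewrite memNset /= ?in_itv /= ?leNgt ?z_lt0 //.
  apply: integral0_eq => t _; rewrite /F indicE memNset ?mule0 //.
  by case=> _ [z0]; move: z_lt0; rewrite ltNge z0.
rewrite mem_set /= ?in_itv /= ?z0 //.
have -> : (fun t => F (t, z)) = (fun t => f z * (\1_`[0%R, z `^ l[ t)%:E).
  apply/funext => t; rewrite /F !indicE; congr (_ * _%:R%:E).
  congr nat_of_bool.
  apply/idP/idP => [/set_mem [t0 [_ tz]]|/set_mem].
    by apply: mem_set; rewrite /= in_itv /= t0.
  by rewrite /= in_itv /= => /andP[t0 tz]; apply: mem_set.
rewrite ge0_integralZl //; last by apply/measurable_EFinP; exact: measurable_indic.
rewrite integral_indic // setIT; congr (_ * _).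
apply: eq_trans (lebesgue_measure_itv _) _; rewrite /= lte_fin.
case: ifPn => [_|]; first by rewrite oppr0 adde0.
rewrite -leNgt => zl_le0.
by have -> : (z `^ l = 0)%R by apply/eqP; rewrite eq_le zl_le0 powR_ge0.
Qed.

Lemma layer_cake : \int[leb]_(z in `[0%R, +oo[) (f z * (z `^ l)%:E) =
  \int[leb]_(t in `[0%R, +oo[) \int[leb]_(z in `](t `^ l^-1)%R, +oo[) f z.
Proof.
rewrite integral_mkcond [RHS]integral_mkcond.
transitivity (\int[leb]_z \int[leb]_t F (t, z)).
  by apply: eq_integral => z _; rewrite F_sectionr.
rewrite -(@fubini_tonelli _ _ _ _ _ leb leb F measurable_F F_ge0).
by apply: eq_integral => t _; exact: F_sectionl.
Qed.

Lemma measurable_tail_integral :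
  measurable_fun (`[0%R, +oo[ : set R)
    (fun t : R => \int[leb]_(z in `](t `^ l^-1)%R, +oo[) f z).
Proof.
apply/measurable_restrictT; first exact: measurable_itv.
have mF := @measurable_fun_fubini_tonelli_F _ _ _ _ _ leb F measurable_F F_ge0.
by apply: eq_measurable_fun mF => t _; exact: F_sectionl.
Qed.

End layer_cake.

Lemma ge0_le_integral_powR (R : realType) (l : R) (f g : R -> \bar R) :
  (0 < l)%R -> (forall x, 0 <= f x) -> (forall x, 0 <= g x) ->
  measurable_fun setT f -> measurable_fun setT g ->
  (forall s, (0 <= s)%R -> \int[lebesgue_measure]_(z in `]s, +oo[%classic) f z
                        <= \int[lebesgue_measure]_(z in `]s, +oo[%classic) g z) ->
  \int[lebesgue_measure]_(z in `[0%R, +oo[) (f z * (z `^ l)%:E)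
    <= \int[lebesgue_measure]_(z in `[0%R, +oo[) (g z * (z `^ l)%:E).
Proof.
move=> l_gt0 f_ge0 g_ge0 mf mg fg; rewrite !layer_cake //.
apply: ge0_le_integral => //.
- by move=> t _; apply: integral_ge0 => z _; exact: f_ge0.
- exact: measurable_tail_integral.
- exact: measurable_tail_integral.
- by move=> t _; apply: fg; exact: powR_ge0.
Qed.

Section survival_function.
Context (R : realType).
Local Notation leb := (@lebesgue_measure R).
Implicit Types (mu : probability R R) (r s : R).

Lemma Gmu_ge0 mu r : 0 <= Gmu mu r.
Proof. exact: measure_ge0. Qed.

Lemma measurable_Gmu mu : measurable_fun setT (Gmu mu).
Proof.
have -> : Gmu mu = EFin \o (fun r => fine (Gmu mu r)).
  by apply/funext => r /=; rewrite fineK ?fin_num_measure.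
apply/measurable_EFinP; apply: nonincreasing_measurable => // r s rs.
rewrite fine_le ?fin_num_measure ?le_measure ?inE //.
by apply: subitvPl; rewrite bnd_simp.
Qed.

Let below_diag : set (R * R) := [set p | (0 <= p.1)%R /\ (p.1 <= p.2)%R].

Let measurable_below_diag : measurable below_diag.
Proof.
rewrite (_ : below_diag =
  [set p | (0 <= p.1)%R] `&` [set p | (p.1 <= p.2)%R]); last first.
  by apply/seteqP; split => p.
apply: measurableI; apply: measurable_set_bool.
- by apply: measurable_fun_ler => //; exact: measurable_fst.
- by apply: measurable_fun_ler; [exact: measurable_fst | exact: measurable_snd].
Qed.

Let diag_indic (p : R * R) : \bar R := (\1_below_diag p)%:E.

Let diag_indic_sectionl (y : R) :
  \int[leb]_s diag_indic (s, y) = (Num.max y 0%R)%:E.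
Proof.
have -> : (fun s => diag_indic (s, y)) = (fun s => (\1_`[0%R, y] s)%:E).
  apply/funext => s; rewrite /diag_indic !indicE; congr (_%:R%:E).
  congr nat_of_bool; apply/idP/idP => [/set_mem [s0 sy]|/set_mem].
    by apply: mem_set; rewrite /= in_itv /= s0.
  by rewrite /= in_itv /= => /andP[s0 sy]; apply: mem_set.
rewrite integral_indic // setIT; apply: eq_trans (lebesgue_measure_itv _) _.
rewrite /= lte_fin; case: ltP => y0.
  by rewrite oppr0 adde0; congr EFin; apply/esym/max_idPl/ltW.
by congr EFin; apply/esym/max_idPr.
Qed.

Let diag_indic_sectionr mu s :
  \int[mu]_y diag_indic (s, y) = (Gmu mu \_ `[0%R, +oo[) s.
Proof.
rewrite patchE; have [s0|s_lt0] := leP 0%R s; last first.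
  rewrite memNset /= ?in_itv /= ?leNgt ?s_lt0 //.
  apply: integral0_eq => y _; rewrite /diag_indic indicE memNset //.
  by case=> s0; move: s_lt0; rewrite ltNge s0.
rewrite mem_set /= ?in_itv /= ?s0 //.
have -> : (fun y => diag_indic (s, y)) = (fun y => (\1_`[s, +oo[ y)%:E).
  apply/funext => y; rewrite /diag_indic !indicE; congr (_%:R%:E).
  congr nat_of_bool; apply/idP/idP => [/set_mem [_ sy]|/set_mem].
    by apply: mem_set; rewrite /= in_itv /= sy.
  by rewrite /= in_itv /= andbT => sy; apply: mem_set.
by rewrite integral_indic // setIT.
Qed.

Lemma integral_id_max0 mu : mu `[0%R, +oo[%classic = 1 ->
  \int[mu]_x x%:E = \int[mu]_x (Num.max x 0%R)%:E.
Proof.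
move=> supp; apply: ae_eq_integral.
- exact: measurableT.
- by apply/measurable_EFinP; exact: measurable_id.
- apply/measurable_EFinP.
  by apply: measurable_maxr; [exact: measurable_id | exact: measurable_cst].
- exists `]-oo, 0%R[%classic; split; first exact: measurable_itv.
    have := @probability_setC _ _ _ mu `[0%R, +oo[%classic (measurable_itv _).
    by rewrite supp subee // setCitvr.
  move=> x /= hx; rewrite in_itv /= ltNge; apply/negP => x0.
  by apply: hx => _; congr EFin; apply/esym/max_idPl.
Qed.

Lemma mean_Gmu mu : mu `[0%R, +oo[%classic = 1 ->
  \int[mu]_x x%:E = \int[leb]_(s in `[0%R, +oo[) Gmu mu s.
Proof.
move=> supp; rewrite integral_id_max0 // [RHS]integral_mkcond.
have mdiag : measurable_fun setT diag_indic.
  by apply/measurable_EFinP; exact: measurable_indic.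
transitivity (\int[mu]_y \int[leb]_s diag_indic (s, y)).
  by apply: eq_integral => y _; rewrite diag_indic_sectionl.
rewrite -(@fubini_tonelli _ _ _ _ _ leb mu diag_indic mdiag) => [|p].
  by apply: eq_integral => s _; exact: diag_indic_sectionr.
by rewrite lee_fin.
Qed.

Lemma lee_sum1_compl {a1 b1 a2 b2 : \bar R} :
  a1 + b1 = 1 -> a2 + b2 = 1 ->
  0 <= a1 -> 0 <= b1 -> 0 <= a2 -> 0 <= b2 -> a2 <= a1 -> b1 <= b2.
Proof.
move: a1 b1 a2 b2 => [a1| |] [b1| |] [a2| |] [b2| |] //=.
by move=> [e1] [e2]; rewrite !lee_fin => _ _ _ _ h; lra.
Qed.

Lemma integral_Gmu_split mu s : admissible mu -> (0 <= s)%R ->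
  \int[leb]_(z in `[0%R, s]) Gmu mu z +
  \int[leb]_(z in `]s, +oo[%classic) Gmu mu z = 1.
Proof.
case=> supp mean _ s0; rewrite -mean mean_Gmu // -ge0_integral_setU //.
- congr integral; apply/seteqP; split => x /=; rewrite !in_itv /=.
  + case=> [/andP[-> //]|]; rewrite !andbT => sx; exact: le_trans s0 (ltW sx).
  + rewrite andbT => x0; have [xs|sx] := leP x s; [left; rewrite x0 | right] => //.
- by apply: measurable_funTS; exact: measurable_Gmu.
- apply/disj_setPS => x [] /=; rewrite !in_itv /= andbT => /andP[_ xs] sx.
  by move: xs; rewrite leNgt sx.
Qed.

Lemma le_tail_Gmu mu1 mu2 s : admissible mu1 -> admissible mu2 -> (0 <= s)%R ->
  \int[leb]_(z in `[0%R, s]) Gmu mu2 z <= \int[leb]_(z in `[0%R, s]) Gmu mu1 z ->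
  \int[leb]_(z in `]s, +oo[%classic) Gmu mu1 z
    <= \int[leb]_(z in `]s, +oo[%classic) Gmu mu2 z.
Proof.
move=> adm1 adm2 s0 le_head.
apply: lee_sum1_compl (integral_Gmu_split _ s adm1 s0)
  (integral_Gmu_split _ s adm2 s0) _ _ _ _ le_head;
  by apply: integral_ge0 => z _; exact: Gmu_ge0.
Qed.

Lemma crossing_le_tail_Gmu mu1 mu2 r0 : admissible mu1 -> admissible mu2 ->
  (forall r, (0 <= r)%R -> (r <= r0)%R -> Gmu mu2 r <= Gmu mu1 r) ->
  (forall r, (r0 < r)%R -> Gmu mu1 r <= Gmu mu2 r) ->
  forall s, (0 <= s)%R ->
  \int[leb]_(z in `]s, +oo[%classic) Gmu mu1 z
    <= \int[leb]_(z in `]s, +oo[%classic) Gmu mu2 z.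
Proof.
move=> adm1 adm2 G21 G12 s s0.
have mG mu (D : set R) : measurable_fun D (Gmu mu).
  by apply: measurable_funTS; exact: measurable_Gmu.
have [sr0|r0s] := leP s r0.
  apply: le_tail_Gmu => //.
  apply: ge0_le_integral => //; [exact: mG..|move=> z /=].
  by rewrite in_itv /= => /andP[z0 zs]; exact: G21 z0 (le_trans zs sr0).
apply: ge0_le_integral => //; [exact: mG..|move=> z /=].
by rewrite in_itv /= andbT => sz; exact: G12 (lt_trans r0s sz).
Qed.

Lemma Lambda_mu_le mu1 mu2 :
  (forall s, (0 <= s)%R ->
    \int[leb]_(z in `]s, +oo[%classic) Gmu mu1 z
      <= \int[leb]_(z in `]s, +oo[%classic) Gmu mu2 z) ->
  forall l, (0 < l)%R -> Lambda_mu mu1 l <= Lambda_mu mu2 l.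
Proof.
move=> tails l l_gt0; rewrite /Lambda_mu.
have moment_ge0 mu :
    0 <= \int[leb]_(z in `[0%R, +oo[) (Gmu mu z * (z `^ l)%:E).
  by apply: integral_ge0 => z _; rewrite mule_ge0 ?Gmu_ge0 // lee_fin powR_ge0.
have l1_ge0 : 0 <= (l + 1)%:E by rewrite lee_fin; lra.
rewrite lee_lne ?in_itv /= ?leey ?andbT ?mule_ge0 //.
apply: lee_wpmul2l => //; apply: ge0_le_integral_powR => //;
  by [exact: Gmu_ge0 | exact: measurable_Gmu].
Qed.

End survival_function.

Lemma Umu_subset (R : realType) (d : measure_display) (T : measurableType d)
    (mu1 mu2 : probability R R) (P : probability T R) :
  (forall l, (0 < l)%R -> Lambda_mu mu1 l <= Lambda_mu mu2 l) ->
  Umu mu1 P `<=` Umu mu2 P.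
Proof.
move=> Lambda12 Q [QP LambdaQ]; split => // l l_gt0.
exact: le_trans (LambdaQ l l_gt0) (Lambda12 l l_gt0).
Qed.

Theorem mainTheorem7 (R : realType) (d : measure_display) (T : measurableType d)
  (mu1 mu2 : probability R R) (P : probability T R) :
  admissible mu1 -> admissible mu2 ->
  ((exists r0 : R, (0 < r0)%R /\
      (forall r : R, (0 <= r)%R -> (r <= r0)%R -> Gmu mu2 r <= Gmu mu1 r) /\
      (forall r : R, (r0 < r)%R -> Gmu mu1 r <= Gmu mu2 r)) ->
   Umu mu1 P `<=` Umu mu2 P)
  /\
  ((forall l : R, (0 < l)%R ->
      \int[lebesgue_measure]_(z in `[0%R, +oo[) (Gmu mu2 z * (z `^ l)%:E) < +oo ->
      ((R0 `^ l)%:E * \int[lebesgue_measure]_(z in `[R0, +oo[) Gmu mu2 z)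
        @[R0 --> +oo%R] --> (0 : \bar R)) ->
   (forall r : R, (0 <= r)%R ->
      \int[lebesgue_measure]_(z in `[0%R, r]) Gmu mu2 z
      <= \int[lebesgue_measure]_(z in `[0%R, r]) Gmu mu1 z) ->
   Umu mu1 P `<=` Umu mu2 P).
Proof.
move=> adm1 adm2; split.
  case=> r0 [_ [G21 G12]]; apply/Umu_subset/Lambda_mu_le.
  exact: crossing_le_tail_Gmu G21 G12.
(* Both means are 1, so comparing the integrals of G on [0, r] already compares
   the tails. *)
move=> _ cumG; apply/Umu_subset/Lambda_mu_le => s s0.
exact: le_tail_Gmu (cumG s s0).
Qed.
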